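(* The number of transversals in any symmetric latin square of order $n$ is congruent to $n$ modulo $2$.
   Context: A latin square $L=[l_{ij}]$ of order $n$ is an $n\times n$ array of $n$ symbols in which each symbol occurs exactly once in each row and column; it is symmetric if $l_{ij}=l_{ji}$ for all $i,j$. A transversal is a set of $n$ cells, one from each row and one from each column, no two containing the same symbol. *)

From mathcomp Require Import all_boot.
Set Implicit Arguments. Unset Strict Implicit. Unset Printing Implicit Defensive.

Definition latin_square (n : nat) (S : finType) (L : 'I_n -> 'I_n -> S) : Prop :=
  [/\ #|S| = n,
      forall i : 'I_n, bijective (L i) &
      forall j : 'I_n, bijective (fun i => L i j)].

Definition symmetric_square (n : nat) (S : Type) (L : 'I_n -> 'I_n -> S) : Prop :=
  forall i j, L i j = L j i.

Definition is_transversal (n : nat) (S : finType) (L : 'I_n -> 'I_n -> S)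
    (T : {set 'I_n * 'I_n}) : bool :=
  [&& #|T| == n,
      [forall i : 'I_n, #|[set c in T | c.1 == i]| == 1],
      [forall j : 'I_n, #|[set c in T | c.2 == j]| == 1] &
      [forall c in T, forall d in T, (L c.1 c.2 == L d.1 d.2) ==> (c == d)]].

Definition num_transversals (n : nat) (S : finType) (L : 'I_n -> 'I_n -> S) : nat :=
  #|[set T : {set 'I_n * 'I_n} | is_transversal L T]|.

From Pilot Require Import Defs.
From mathcomp Require Import all_boot.
Set Implicit Arguments. Unset Strict Implicit. Unset Printing Implicit Defensive.

(* Everything rests on one counting principle: an involution of a finite set
   has as many points as fixed points, modulo 2 (the other points come in
   pairs {x, f x}).

   1. Applied to transposition of cells restricted to the n cells holding a
      given symbol s, it shows that s occurs on the diagonal n times mod 2.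
      Hence if n is odd every symbol occurs on the diagonal, so the diagonal
      is injective, and if n is even no symbol occurs there exactly once, so
      the diagonal is not injective: the diagonal is injective iff n is odd.
   2. Applied to transposition of transversals (which maps transversals of a
      symmetric square to transversals), it reduces the count to the
      transversals fixed by transposition.  Such a transversal can only be
      the main diagonal, which is a transversal iff the diagonal is injective,
      i.e. iff n is odd by step 1. *)

(* An involution f stabilising A has #|A| = #|fixed points of f in A| mod 2:
   the non-fixed points split into the points below and above their image
   (for an arbitrary enumeration of T), and f exchanges these two halves. *)
Lemma card_involution_fixed (T : finType) (f : T -> T) (A : {set T}) :
  involutive f -> (forall x, x \in A -> f x \in A) ->
  #|A| = #|[set x in A | f x == x]| %[mod 2].
Proof.
move=> fK fA.
set F := [set x in A | f x == x].
set Up := [set x in A | enum_rank x < enum_rank (f x)].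
set Down := [set x in A | enum_rank (f x) < enum_rank x].
have DownE : Down = f @: Up.
  apply/setP=> x; apply/idP/imsetP.
  - by rewrite inE => /andP[xA lt]; exists (f x); rewrite ?inE ?fA ?fK.
  - by case=> y; rewrite inE => /andP[yA lt] ->; rewrite inE fA // fK.
have card_Down : #|Down| = #|Up| by rewrite DownE card_imset //; exact: inv_inj.
have AE : A = F :|: (Up :|: Down).
  apply/setP=> x; rewrite !inE; case: (x \in A) => //=.
  case: (eqVneq (f x) x) => //= fx_neq.
  case: ltngtP => //= /ord_inj/enum_rank_inj fxE.
  by rewrite -fxE eqxx in fx_neq.
have F_Up_Down : F :&: (Up :|: Down) = set0.
  apply/setP=> x; rewrite !inE; case: (x \in A) => //=.
  by case: eqP => //= ->; rewrite ltnn.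
have Up_Down : Up :&: Down = set0.
  apply/setP=> x; rewrite !inE; case: (x \in A) => //=.
  by apply/negP => /andP[lt1 lt2]; have := ltn_trans lt1 lt2; rewrite ltnn.
rewrite {1}AE cardsU F_Up_Down cards0 subn0 cardsU Up_Down cards0 subn0.
by rewrite card_Down addnn -muln2 addnC modnMDl.
Qed.

Section LatinSquare.

Variables (n : nat) (S : finType) (L : 'I_n -> 'I_n -> S).

Definition diag_cells : {set 'I_n * 'I_n} := [set c | c.1 == c.2].

Lemma card_diag_cells : #|diag_cells| = n.
Proof.
have -> : diag_cells = [set (i, i) | i : 'I_n].
  apply/setP => -[i j]; rewrite !inE /=; apply/eqP/imsetP.
  - by move=> ->; exists j.
  - by case=> k _ [-> ->].
by rewrite card_imset ?card_ord // => i j [].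
Qed.

Definition transpose_cells (T : {set 'I_n * 'I_n}) : {set 'I_n * 'I_n} :=
  swap_pair @^-1: T.

Lemma transpose_cellsK : involutive transpose_cells.
Proof. by move=> T; apply/setP => -[i j]; rewrite !inE. Qed.

Section Latin.

Hypothesis L_latin : latin_square L.

(* Each symbol fills exactly n cells: one in each row. *)
Lemma card_symbol_cells (s : S) : #|[set c | L c.1 c.2 == s]| = n.
Proof.
case: L_latin => _ rows _.
set X := [set c | L c.1 c.2 == s].
have row_inj : {in X &, injective (fun c : 'I_n * 'I_n => c.1)}.
  move=> [i j] [i' j']; rewrite !inE /= => /eqP Lij /eqP Lij' ii'; subst i'.
  by case: (rows i) => g gK _; rewrite -(gK j) -(gK j') Lij Lij'.
rewrite -(card_in_imset row_inj) -[in RHS](card_ord n) -cardsT.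
suff -> : [set c.1 | c in X] = setT by [].
apply/setP => i; rewrite inE; case: (rows i) => g _ Kg.
by apply/imsetP; exists (i, g s); rewrite // inE /= Kg.
Qed.

Hypothesis L_sym : symmetric_square L.

(* Step 1: every symbol occurs on the diagonal n times modulo 2, because
   transposition is an involution of the cells holding it, whose fixed
   points are the diagonal ones. *)
Lemma card_diag_symbol (s : S) : #|[set i | L i i == s]| = n %[mod 2].
Proof.
rewrite -[n in _ = n %[mod 2]](card_symbol_cells s).
rewrite (card_involution_fixed (f := swap_pair)); first last.
- by move=> [i j]; rewrite !inE /= L_sym.
- exact: swap_pairK.
have pair_inj : injective (fun i : 'I_n => (i, i)) by move=> i j [].
congr (_ %% 2); rewrite -(card_imset _ pair_inj).
apply: eq_card => -[i j]; rewrite !inE /= xpair_eqE.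
apply/imsetP/andP => [[k] | [/eqP Lij /andP[/eqP ji _]]].
- by rewrite inE => /eqP Lk [-> ->]; rewrite Lk !eqxx.
- by move: ji => /= ji; subst j; exists i; rewrite ?inE ?Lij.
Qed.

Lemma diag_injective_odd : 0 < n -> injective (fun i => L i i) <-> odd n.
Proof.
move=> n_gt0; case: L_latin => cardS _ _; split => [diag_inj | n_odd].
- pose i0 := Ordinal n_gt0.
  have := card_diag_symbol (L i0 i0); rewrite !modn2.
  have -> : [set i | L i i == L i0 i0] = [set i0].
    by apply/setP => i; rewrite !inE; apply/eqP/eqP => [/diag_inj | ->].
  by rewrite cards1; case: (odd n).
- have diag_onto s : s \in codom (fun i => L i i).
    have := card_diag_symbol s; rewrite !modn2 n_odd.
    case: (set_0Vmem [set i | L i i == s]) => [-> | [i]]; first by rewrite cards0.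
    by rewrite inE => /eqP <- _; exact: codom_f.
  apply/injectiveP; change (uniq (codom (fun i => L i i))).
  apply/card_uniqP/eqP; rewrite size_codom card_ord eqn_leq.
  apply/andP; split.
  + by rewrite -[n in _ <= n](card_ord n) -(size_codom (fun i => L i i)) card_size.
  + by rewrite -[leqLHS]cardS; apply/subset_leq_card/subsetP => s _; exact: diag_onto.
Qed.

End Latin.

(* Two cells of a transversal holding the same symbol coincide.  (The name
   is_transversal is qualified because finset also defines one, for
   partitions.) *)
Lemma transversal_symbol_inj (T : {set 'I_n * 'I_n}) c d :
  Defs.is_transversal L T -> c \in T -> d \in T -> L c.1 c.2 = L d.1 d.2 -> c = d.
Proof.
case/and4P => _ _ _ /forall_inP distinct cT dT Lcd.
by apply/eqP; move/forall_inP: (distinct c cT) => /(_ d dT); rewrite Lcd eqxx.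
Qed.

Hypothesis L_sym : symmetric_square L.

Lemma transversal_transpose (T : {set 'I_n * 'I_n}) :
  Defs.is_transversal L T -> Defs.is_transversal L (transpose_cells T).
Proof.
move=> T_tr; have /and4P[T_card T_rows T_cols _] := T_tr.
have swap_inj : injective (@swap_pair 'I_n 'I_n) := can_inj swap_pairK.
have lineE (p q : 'I_n * 'I_n -> 'I_n) i : (forall c, p (swap_pair c) = q c) ->
    [set c in transpose_cells T | q c == i] = swap_pair @^-1: [set c in T | p c == i].
  by move=> pq; apply/setP => c; rewrite !inE pq.
apply/and4P; split.
- by rewrite card_preimset.
- by apply/forallP => i; rewrite (lineE snd) // card_preimset // (forallP T_cols).
- by apply/forallP => i; rewrite (lineE fst) // card_preimset // (forallP T_rows).
- apply/forall_inP => c; rewrite inE => cT; apply/forall_inP => d; rewrite inE => dT.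
  apply/implyP => /eqP Lcd; apply/eqP; apply: swap_inj.
  by apply: transversal_symbol_inj T_tr cT dT _; rewrite /= L_sym Lcd L_sym.
Qed.

Lemma transpose_diag_cells : transpose_cells diag_cells = diag_cells.
Proof. by apply/setP => -[i j]; rewrite !inE eq_sym. Qed.

(* A transversal fixed by transposition is the main diagonal: a cell c of it
   and its transpose hold the same symbol, hence are equal. *)
Lemma transpose_fixed_transversal (T : {set 'I_n * 'I_n}) :
  Defs.is_transversal L T -> transpose_cells T = T -> T = diag_cells.
Proof.
move=> T_tr T_fix; have /and4P[/eqP T_card _ _ _] := T_tr.
apply/eqP; rewrite eqEcard card_diag_cells T_card leqnn andbT.
apply/subsetP => c cT; have swap_cT : swap_pair c \in T by rewrite -T_fix inE in cT.
have := transversal_symbol_inj T_tr cT swap_cT; rewrite /= L_sym => /(_ erefl) cE.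
by rewrite inE {1}cE.
Qed.

Lemma diag_transversalP :
  reflect (injective (fun i => L i i)) (Defs.is_transversal L diag_cells).
Proof.
have diag_line (p : 'I_n * 'I_n -> 'I_n) i : p =1 fst \/ p =1 snd ->
    #|[set c in diag_cells | p c == i]| == 1.
  move=> p_proj; apply/cards1P; exists (i, i); apply/setP => -[a b].
  rewrite !inE /= xpair_eqE; case: (eqVneq a b) => [<- | ab].
    by case: p_proj => -> /=; rewrite andbb.
  by case: p_proj => -> /=; apply/esym/negbTE; apply: contra ab => /andP[/eqP-> /eqP->].
apply: (iffP idP) => [D_tr i j Lij | diag_inj].
  have di (k : 'I_n) : (k, k) \in diag_cells by rewrite inE.
  by case: (transversal_symbol_inj D_tr (di i) (di j) Lij).
apply/and4P; split.
- by rewrite card_diag_cells.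
- by apply/forallP => i; apply: diag_line; left.
- by apply/forallP => i; apply: diag_line; right.
- apply/forall_inP => -[a b]; rewrite inE /= => /eqP <-.
  apply/forall_inP => -[c d]; rewrite inE /= => /eqP <-.
  by apply/implyP => /eqP/diag_inj ->.
Qed.

Lemma card_fixed_transversals :
  #|[set T in [set T | Defs.is_transversal L T] | transpose_cells T == T]|
  = Defs.is_transversal L diag_cells.
Proof.
case: (boolP (Defs.is_transversal L diag_cells)) => D_tr /=.
- apply/eqP/cards1P; exists diag_cells; apply/setP => T; rewrite !inE.
  apply/andP/eqP => [[T_tr /eqP T_fix] | ->].
  + exact: transpose_fixed_transversal.
  + by rewrite transpose_diag_cells eqxx.
- apply/eqP; rewrite cards_eq0; apply/eqP/setP => T; rewrite !inE.
  apply/negP => /andP[T_tr /eqP T_fix].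
  by move: D_tr; rewrite -(transpose_fixed_transversal T_tr T_fix) T_tr.
Qed.

End LatinSquare.

Theorem theorem4p5 (n : nat) (S : finType) (L : 'I_n -> 'I_n -> S) (hn : 0 < n) :
  latin_square L -> symmetric_square L ->
  num_transversals L = n %[mod 2].
Proof.
move=> L_latin L_sym; rewrite /num_transversals.
rewrite (card_involution_fixed (@transpose_cellsK n)); last first.
  by move=> T; rewrite !inE; exact: transversal_transpose.
rewrite (card_fixed_transversals L_sym).
have diag_tr_odd : Defs.is_transversal L (diag_cells n) = odd n.
  by apply/diag_transversalP/idP => /(diag_injective_odd L_latin L_sym hn).
by rewrite diag_tr_odd !modn2 oddb.
Qed.
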